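(* (a) Let $\rho(0)=1$, $\rho(t)=\frac1{2t}(1-\sqrt{1-4t})$ for $0<t\le1/4$, and $\kappa(t)=(1-\sqrt2\,\rho(t)t)^{-1}$ for $0\le t\le1/4$. Then $\rho$ and $\kappa$ are increasing on $[0,1/4]$, $\rho(t)\le\kappa(t)$ for all $t\in[0,1/4]$, and for every positive integer $n$, $\rho\big(\tfrac{n}{(n+1)^2}\big)=\tfrac{n+1}{n}$ and $\kappa\big(\tfrac{n}{(n+1)^2}\big)=\big(1-\tfrac{\sqrt2}{n+1}\big)^{-1}<\big(1-\tfrac{10}{7(n+1)}\big)^{-1}$. (b) Let $A\in M_2(\mathbb C)$ satisfy $\|A-A^2\|_{HS}\le\varepsilon<2/9$. Then $\|2A-I\|_{HS}\ge(2-6\|A-A^2\|_{HS})^{1/2}$, and $\operatorname{tr}(A)\in\bigcup_{j\in\{0,1,2\}}\overline{\mathbb D}_j(\sqrt2\rho(\varepsilon)\varepsilon)\subseteq\bigcup_{j\in\{0,1,2\}}\overline{\mathbb D}_j(10/21)$. Moreover: if $|\operatorname{tr}(A)-2|<1/2$ then $\|I-A\|_{HS}\le\kappa(\varepsilon)\varepsilon$; if $|\operatorname{tr}(A)|<1/2$ then $\|A\|_{HS}\le\kappa(\varepsilon)\varepsilon$; if $|\operatorname{tr}(A)-1|<1/2$ then there is a rank-one idempotent $P\in M_2(\mathbb C)$ with $\|A-P\|_{HS}\le\rho(\varepsilon)\varepsilon$.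
   Context: $\|A\|_{HS}=(\operatorname{tr}(A^*A))^{1/2}$ is the Hilbert–Schmidt norm; $\overline{\mathbb D}_w(r)$ is the closed disc in $\mathbb C$ of centre $w$ and radius $r$. *)

(* Complex numbers: an arbitrary numClosedFieldType C
   (an algebraically closed field with conjugation and norm, e.g. C). *)
From HB Require Import structures.
From mathcomp Require Import all_boot all_order all_algebra.
Set Implicit Arguments. Unset Strict Implicit. Unset Printing Implicit Defensive.
Import Order.TTheory GRing.Theory Num.Theory.
Local Open Scope ring_scope.

Definition rho (C : numClosedFieldType) (t : C) : C :=
  if t == 0 then 1 else (1 - sqrtC (1 - 4 * t)) / (2 * t).

Definition kappa (C : numClosedFieldType) (t : C) : C :=
  (1 - sqrtC 2 * rho t * t)^-1.

Definition hs_norm (C : numClosedFieldType) (n : nat) (A : 'M[C]_n) : C :=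
  sqrtC (\tr ((map_mx (fun z : C => z^*) A)^T *m A)).

Definition cdisc (C : numClosedFieldType) (w r : C) : pred C :=
  fun z => `|z - w| <= r.

(* Write u(t) = (1 - sqrt (1 - 4t)) / 2 for the smaller root of
   u - u^2 = t.  Then rho t = 1 / (1 - u(t)), rho t * t = u(t) and
   kappa t = 1 / (1 - sqrt 2 * u(t)), so monotonicity and rho <= kappa follow
   from the monotonicity of u on [0, 1/4], and u(n / (n+1)^2) = 1 / (n+1)
   gives the closed forms; the last inequality is 7 sqrt 2 < 10.

   By Schur triangularization A = P^* T P with P unitary and
   T = [[a, 0], [c, d]] lower triangular; every quantity in the statement is
   invariant under this unitary conjugation, so it suffices to treat T, whose
   defect T - T^2 = [[a - a^2, 0], [c (1 - a - d), d - d^2]] is explicit.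
   With u = u(eps) we have u - u^2 = eps and 3u < 1 (as eps < 2/9).  Since
   |x - x^2| <= u - u^2 forces x to lie near a root b of X - X^2, the diagonal
   entries round to b1, b2 in {0, 1} with |a - b1|^2 + |d - b2|^2 <= u^2.
   Hence the trace lies within sqrt 2 * u <= 10/21 of b1 + b2, which the trace
   hypotheses pin down: for b1 = b2 = 1, |a|, |d| and |1 - a - d| are at least
   1 - sqrt 2 * u and the defect controls ||I - T||; trace near 0 reduces to
   this case through T |-> I - T; for b1 + b2 = 1 the matrix [[b1, 0], [c, b2]]
   is a rank-one idempotent within u of T.  The lower bound on ||2A - I||
   follows from |2x - 1|^2 = |1 - 4(x - x^2)|. *)

From HB Require Import structures.
From mathcomp Require Import all_boot all_order all_algebra.
From mathcomp Require Import ring.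
From mathcomp Require Import sesquilinear spectral.
Import Order.TTheory GRing.Theory Num.Theory.
Set Implicit Arguments.
Unset Strict Implicit.
Unset Printing Implicit Defensive.
Local Open Scope ring_scope.
Local Open Scope sesquilinear_scope.

Section NearIdempotent.
Variable C : numClosedFieldType.
Implicit Types (a c d e eps k r s t u v w x y z X : C).

Lemma sqrt2_ge0 : 0 <= sqrtC (2 : C).
Proof. by rewrite sqrtC_ge0 ler0n. Qed.

Lemma sqrt2_gt1 : 1 < sqrtC (2 : C).
Proof. by rewrite -[X in X < _]sqrtC1 ltr_sqrtC ?nnegrE ?ler0n ?ler01 // ltr1n. Qed.

Lemma sqrt2_lt2 : sqrtC (2 : C) < 2.
Proof.
by rewrite -ltr_sqr ?nnegrE ?sqrtC_ge0 ?ler0n // sqrtCK -natrX ltr_nat.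
Qed.

Lemma two_sqrt2_le3 : 2 * sqrtC (2 : C) <= 3.
Proof.
rewrite -ler_sqr ?nnegrE ?mulr_ge0 ?ler0n ?sqrt2_ge0 // exprMn sqrtCK.
by rewrite -!natrX -natrM ler_nat.
Qed.

Lemma seven_sqrt2_lt10 : 7 * sqrtC (2 : C) < 10.
Proof.
rewrite -ltr_sqr ?nnegrE ?mulr_ge0 ?sqrtC_ge0 ?ler0n // exprMn sqrtCK.
by rewrite -!natrX -natrM ltr_nat.
Qed.

Lemma lt_two_ninths_le_quarter t : t < 2/9 -> t <= 1/4.
Proof.
move=> t_lt; rewrite -subr_ge0 (_ : 1/4 - t = (2/9 - t) + 1/36); last by field.
by rewrite addr_ge0 ?divr_ge0 ?ler0n // subr_ge0 ltW.
Qed.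

Definition lowroot t : C := (1 - sqrtC (1 - 4 * t)) / 2.

Lemma lowroot_root t : lowroot t - lowroot t ^+ 2 = t.
Proof.
rewrite /lowroot; set s := sqrtC _.
have -> : (1 - s) / 2 - ((1 - s) / 2) ^+ 2 = (1 - s ^+ 2) / 4 by field.
by rewrite sqrtCK; field.
Qed.

Lemma lowroot_inv u : 0 <= u -> u <= 1/2 -> lowroot (u - u ^+ 2) = u.
Proof.
move=> u_ge0 u_le; have h : 0 <= 1 - 2 * u.
  by rewrite subr_ge0 -ler_pdivlMl ?ltr0n // mulrC.
rewrite /lowroot (_ : 1 - 4 * (u - u ^+ 2) = (1 - 2 * u) ^+ 2); last by ring.
by rewrite sqrCK //; field.
Qed.

Lemma disc_bounds t : 0 <= t -> t <= 1/4 -> 0 <= 1 - 4 * t /\ 1 - 4 * t <= 1.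
Proof.
move=> t_ge0 t_le; rewrite subr_ge0 -ler_pdivlMl ?ltr0n // mulrC t_le.
by rewrite gerBl mulr_ge0 ?ler0n.
Qed.

Lemma lowroot_bounds t : 0 <= t -> t <= 1/4 -> 0 <= lowroot t /\ lowroot t <= 1/2.
Proof.
move=> t_ge0 t_le; have [d_ge0 d_le1] := disc_bounds t_ge0 t_le.
have s_le1 : sqrtC (1 - 4 * t) <= 1.
  by rewrite -[X in _ <= X]sqrtC1 ler_sqrtC ?nnegrE ?ler01.
rewrite /lowroot divr_ge0 ?subr_ge0 ?ler0n // ler_pM2r ?invr_gt0 ?ltr0n //.
by rewrite gerBl sqrtC_ge0.
Qed.

Lemma lowroot_lt s t : 0 <= s -> s < t -> t <= 1/4 -> lowroot s < lowroot t.
Proof.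
move=> s_ge0 st t_le; have t_ge0 := le_trans s_ge0 (ltW st).
have [ds_ge0 _] := disc_bounds s_ge0 (le_trans (ltW st) t_le).
have [dt_ge0 _] := disc_bounds t_ge0 t_le.
rewrite /lowroot ltr_pM2r ?invr_gt0 ?ltr0n // ltrD2l ltrN2.
by rewrite ltr_sqrtC ?nnegrE // ltrD2l ltrN2 ltr_pM2l ?ltr0n.
Qed.

Lemma lowroot_lt_third t : 0 <= t -> t < 2/9 -> 3 * lowroot t < 1.
Proof.
move=> t_ge0 t_lt; have t_le := lt_two_ninths_le_quarter t_lt.
have [u_ge0 u_le] := lowroot_bounds t_ge0 t_le.
have root := lowroot_root t; set u := lowroot t in u_ge0 u_le root *.
have h23 : 0 < 2 - 3 * u.
  rewrite -(pmulr_rgt0 _ (ltr0n _ 2)) (_ : 2 * (2 - 3 * u) = 1 + 3 * (1 - 2 * u)); last by ring.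
  by rewrite ltr_pwDl ?ltr01 // mulr_ge0 ?ler0n // subr_ge0 -ler_pdivlMl ?ltr0n // mulrC.
rewrite -subr_lt0 -(pmulr_llt0 _ h23).
have -> : (3 * u - 1) * (2 - 3 * u) = 9 * (u - u ^+ 2) - 2 by ring.
by rewrite root subr_lt0 -ltr_pdivlMl ?ltr0n // mulrC.
Qed.

Lemma sqrt2_lowroot_le t : 0 <= t -> t < 2/9 -> sqrtC 2 * lowroot t <= 10/21.
Proof.
move=> t_ge0 t_lt; have [u_ge0 _] := lowroot_bounds t_ge0 (lt_two_ninths_le_quarter t_lt).
rewrite ler_pdivlMr ?ltr0n // (_ : sqrtC 2 * lowroot t * 21 = (7 * sqrtC 2) * (3 * lowroot t)); last by ring.
rewrite -[10]mulr1; apply: ler_pM.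
- by rewrite mulr_ge0 ?ler0n ?sqrt2_ge0.
- exact: mulr_ge0 (ler0n _ 3) u_ge0.
- exact: ltW seven_sqrt2_lt10.
- exact: ltW (lowroot_lt_third t_ge0 t_lt).
Qed.

(* rho and kappa in terms of the smaller root; note that the square root of a
   complex number is never -1, so these identities hold for every t. *)
Lemma sqrtC_neqN1 x : sqrtC x != -1 :> C.
Proof.
apply/eqP => hx; have := sqrtCK x; rewrite hx sqrrN expr1n => x1.
move: hx; rewrite -x1 sqrtC1 => one_eqN1.
by have := @ltr01 C; rewrite [X in _ < X]one_eqN1 oppr_gt0 ltr10.
Qed.

Lemma rho_mul t : rho t * t = lowroot t.
Proof.
rewrite /rho /lowroot; case: eqP => [->|t_neq0]; last by field; apply/eqP.
by rewrite !mulr0 subr0 sqrtC1 subrr mul0r.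
Qed.

Lemma rhoE t : rho t = (1 - lowroot t)^-1.
Proof.
rewrite /rho /lowroot; case: eqP => [->|/eqP t_neq0].
  by rewrite mulr0 subr0 sqrtC1 subrr mul0r subr0 invr1.
have h := sqrtCK (1 - 4 * t); have hs := sqrtC_neqN1 (1 - 4 * t).
move: h hs t_neq0; set s := sqrtC _; clearbody s => h hs t_neq0.
have s1 : 1 + s != 0 by rewrite addrC addr_eq0.
have -> : t = (1 - s ^+ 2) / 4 by rewrite h; field.
have s2 : 1 - s ^+ 2 != 0 by rewrite h subKr mulf_neq0 ?pnatr_eq0.
have e : 2 - (1 - s) = 1 + s by ring.
by field; rewrite e s1 s2.
Qed.

Lemma kappaE t : kappa t = (1 - sqrtC 2 * lowroot t)^-1.
Proof. by rewrite /kappa -mulrA rho_mul. Qed.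

Lemma kappa_den_gt0 t : 0 <= t -> t <= 1/4 -> 0 < 1 - sqrtC 2 * lowroot t.
Proof.
move=> t_ge0 t_le; have [_ u_le] := lowroot_bounds t_ge0 t_le.
rewrite subr_gt0 (le_lt_trans (ler_wpM2l sqrt2_ge0 u_le)) //.
by rewrite mulrA mulr1 ltr_pdivrMr ?ltr0n // mul1r sqrt2_lt2.
Qed.

Lemma kappa_den_le_rho_den t : 0 <= t -> t <= 1/4 ->
  1 - sqrtC 2 * lowroot t <= 1 - lowroot t.
Proof.
move=> t_ge0 t_le; have [u_ge0 _] := lowroot_bounds t_ge0 t_le.
by rewrite lerD2l lerN2 ler_peMl // ltW // sqrt2_gt1.
Qed.

Lemma rho_den_gt0 t : 0 <= t -> t <= 1/4 -> 0 < 1 - lowroot t.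
Proof.
by move=> t_ge0 t_le; rewrite (lt_le_trans (kappa_den_gt0 t_ge0 t_le)) ?kappa_den_le_rho_den.
Qed.

Lemma rho_increasing s t : 0 <= s -> s < t -> t <= 1/4 -> rho s < rho t.
Proof.
move=> s_ge0 st t_le; have t_ge0 := le_trans s_ge0 (ltW st).
rewrite !rhoE ltf_pV2 ?posrE ?rho_den_gt0 ?(le_trans (ltW st)) //.
by rewrite ltrD2l ltrN2 lowroot_lt.
Qed.

Lemma kappa_increasing s t : 0 <= s -> s < t -> t <= 1/4 -> kappa s < kappa t.
Proof.
move=> s_ge0 st t_le; have t_ge0 := le_trans s_ge0 (ltW st).
rewrite !kappaE ltf_pV2 ?posrE ?kappa_den_gt0 ?(le_trans (ltW st)) //.
by rewrite ltrD2l ltrN2 ltr_pM2l ?lowroot_lt // (lt_trans ltr01 sqrt2_gt1).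
Qed.

Lemma rho_le_kappa t : 0 <= t -> t <= 1/4 -> rho t <= kappa t.
Proof.
move=> t_ge0 t_le; rewrite rhoE kappaE.
by rewrite lef_pV2 ?posrE ?rho_den_gt0 ?kappa_den_gt0 ?kappa_den_le_rho_den.
Qed.

Lemma lowroot_at n : (0 < n)%N -> lowroot (n%:R / n.+1%:R ^+ 2) = n.+1%:R^-1 :> C.
Proof.
move=> n_gt0; have n1 : (n.+1%:R : C) != 0 by rewrite pnatr_eq0.
have -> : n%:R / n.+1%:R ^+ 2 = n.+1%:R^-1 - n.+1%:R^-1 ^+ 2 :> C.
  by rewrite -natr1; field; rewrite natr1.
rewrite lowroot_inv ?invr_ge0 ?ler0n // mul1r lef_pV2 ?posrE ?ltr0n // ler_nat.
exact: n_gt0.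
Qed.

Lemma rho_at n : (0 < n)%N -> rho (n%:R / n.+1%:R ^+ 2) = n.+1%:R / n%:R :> C.
Proof.
move=> n_gt0; rewrite rhoE lowroot_at //.
have n0 : (n%:R : C) != 0 by rewrite pnatr_eq0 -lt0n.
by rewrite -natr1; field; rewrite n0 natr1 pnatr_eq0.
Qed.

Lemma kappa_at n : (0 < n)%N ->
  kappa (n%:R / n.+1%:R ^+ 2) = (1 - sqrtC 2 / n.+1%:R)^-1 :> C.
Proof. by move=> n_gt0; rewrite kappaE lowroot_at. Qed.

(* The comparison of the closed form rests on 7 sqrt 2 < 10. *)
Lemma kappa_at_lt n : (0 < n)%N ->
  (1 - sqrtC 2 / n.+1%:R)^-1 < ((1 : C) - 10 / (7 * n.+1%:R))^-1.
Proof.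
move=> n_gt0; have N_gt0 : (0 : C) < n.+1%:R by rewrite ltr0n.
have den_gt0 : (0 : C) < 1 - 10 / (7 * n.+1%:R).
  rewrite subr_gt0 ltr_pdivrMr ?mulr_gt0 ?ltr0n // mul1r -natrM ltr_nat.
  by rewrite (@leq_trans (7 * 2)) // leq_pmul2l.
have lt_den : (1 : C) - 10 / (7 * n.+1%:R) < 1 - sqrtC 2 / n.+1%:R.
  rewrite ltrD2l ltrN2 (_ : 10 / (7 * n.+1%:R) = (10 / 7) / n.+1%:R); last first.
    by field; rewrite addrC natr1 pnatr_eq0.
  by rewrite ltr_pM2r ?invr_gt0 // ltr_pdivlMr ?ltr0n // mulrC seven_sqrt2_lt10.
by rewrite ltf_pV2 ?posrE ?(lt_trans den_gt0 lt_den).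
Qed.

Lemma sqrtC_le X e : 0 <= X -> 0 <= e -> X <= e ^+ 2 -> sqrtC X <= e.
Proof. by move=> X_ge0 e_ge0 h; rewrite -(sqrCK e_ge0) ler_sqrtC ?nnegrE ?exprn_ge0. Qed.

Lemma sum_le_sqrt2 x y w : 0 <= x -> 0 <= y -> 0 <= w -> x ^+ 2 + y ^+ 2 <= w ^+ 2 ->
  x + y <= sqrtC 2 * w.
Proof.
move=> x_ge0 y_ge0 w_ge0 h; rewrite -ler_sqr ?nnegrE ?addr_ge0 ?mulr_ge0 ?sqrt2_ge0 //.
rewrite exprMn sqrtCK (le_trans _ (ler_wpM2l (ler0n _ 2) h)) //.
rewrite -subr_ge0 (_ : _ - _ = (x - y) ^+ 2); last by ring.
by rewrite real_exprn_even_ge0 // realB ?ger0_real.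
Qed.

Lemma norm_ge_near w v r : `|w - v| <= r -> `|v| - r <= `|w|.
Proof.
move=> h; have := lerB_dist v (v - w); rewrite (_ : v - (v - w) = w); last by ring.
by apply: le_trans; rewrite lerD2l lerN2 distrC.
Qed.

Lemma near_nat_unique x (n m : nat) : `|x - n%:R| <= 10/21 -> `|x - m%:R| < 1/2 -> n = m.
Proof.
move=> hn hm; have [//|n_neq_m] := eqVneq n m; exfalso.
have gap : (1 : C) <= `|n%:R - m%:R|.
  case: (ltngtP n m) n_neq_m => // h _; first rewrite distrC.
    by rewrite -natrB ?(ltnW h) // normr_nat ler1n subn_gt0.
  by rewrite -natrB ?(ltnW h) // normr_nat ler1n subn_gt0.
have close : `|n%:R - m%:R| < 10/21 + 1/2 :> C.
  by rewrite (le_lt_trans (ler_distD x _ _)) // distrC ler_ltD.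
have : 10/21 + 1/2 < 1 :> C.
  by rewrite -subr_gt0 (_ : 1 - _ = 1/42) ?divr_gt0 ?ltr0n //; field.
by move=> /(lt_trans close)/(le_lt_trans gap); rewrite ltxx.
Qed.

Lemma near_root_dichotomy x u :
  0 <= u -> `|x - x ^+ 2| <= u - u ^+ 2 -> `|x| <= u \/ `|1 - x| <= u.
Proof.
move=> u_ge0 hx; have u_real := ger0_real u_ge0.
have [x_near|x_far] := real_leP (normr_real x) u_real; first by left.
have [y_near|y_far] := real_leP (normr_real (1 - x)) u_real; first by right.
have sum_ge1 : 1 <= `|x| + `|1 - x|.
  by rewrite -[X in X <= _]normr1 -[X in `|X|](subrK x 1) addrC ler_normD.
have : u - u ^+ 2 < `|x - x ^+ 2|.
  rewrite -subr_gt0 (_ : x - x ^+ 2 = x * (1 - x)); last by ring.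
  rewrite normrM (_ : _ - _ = (`|x| - u) * (`|1 - x| - u) + u * (`|x| + `|1 - x| - 1)); last by ring.
  by rewrite ltr_pwDl ?mulr_gt0 ?mulr_ge0 ?subr_gt0 ?subr_ge0.
by move=> /lt_le_trans/(_ hx); rewrite ltxx.
Qed.

(* ... and its distance to that root b is at most |x - x^2| / (1 - u), since
   x is at distance at least 1 - u from the other root. *)
Lemma round_to_root x u : 0 <= u -> `|x - x ^+ 2| <= u - u ^+ 2 ->
  exists b : bool, (1 - u) * `|x - b%:R| <= `|x - x ^+ 2|.
Proof.
move=> u_ge0 hx; have [b near_b] : exists b : bool, `|x - b%:R| <= u.
  by case: (near_root_dichotomy u_ge0 hx) => h; [exists false | exists true];
    rewrite ?subr0 // distrC.
exists b; have far_nb : 1 - u <= `|x - (~~ b)%:R|.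
  have unit_gap : `|b%:R - (~~ b)%:R : C| = 1.
    by case: b {near_b}; rewrite /= ?subr0 ?sub0r ?normrN normr1.
  have := ler_distD x (b%:R) ((~~ b)%:R); rewrite unit_gap distrC => gap_le.
  by rewrite lerBlDl (le_trans gap_le) // lerD2r.
have -> : `|x - x ^+ 2| = `|x - b%:R| * `|x - (~~ b)%:R|.
  by rewrite -normrM -normrN; congr `|_|; case: b {near_b far_nb} => /=; ring.
by rewrite mulrC ler_wpM2l.
Qed.

(* The Euclidean norm of a triple: the HS norm of [[x, 0], [y, z]]. *)
Definition norm3 x y z : C := sqrtC (`|x| ^+ 2 + `|y| ^+ 2 + `|z| ^+ 2).

Lemma sumsq3_ge0 x y z : 0 <= `|x| ^+ 2 + `|y| ^+ 2 + `|z| ^+ 2.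
Proof. by rewrite !addr_ge0 ?exprn_ge0. Qed.

Lemma norm3_ge0 x y z : 0 <= norm3 x y z.
Proof. by rewrite sqrtC_ge0 sumsq3_ge0. Qed.

Lemma norm3_sqr x y z : norm3 x y z ^+ 2 = `|x| ^+ 2 + `|y| ^+ 2 + `|z| ^+ 2.
Proof. exact: sqrtCK. Qed.

Lemma sqr_outer_le_norm3 x y z : `|x| ^+ 2 + `|z| ^+ 2 <= norm3 x y z ^+ 2.
Proof. by rewrite norm3_sqr lerD2r lerDl exprn_ge0. Qed.

Lemma norm3_le x y z x' y' z' :
  `|x| <= `|x'| -> `|y| <= `|y'| -> `|z| <= `|z'| -> norm3 x y z <= norm3 x' y' z'.
Proof.
move=> hx hy hz; rewrite ler_sqrtC ?nnegrE ?sumsq3_ge0 //.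
by rewrite !lerD // ler_sqr ?nnegrE.
Qed.

Lemma norm3_scale k x y z : 0 <= k -> k * norm3 x y z = norm3 (k * x) (k * y) (k * z).
Proof.
move=> k_ge0; rewrite /norm3 !normrM ger0_norm // !exprMn -!mulrDr.
by rewrite sqrtCM ?nnegrE ?exprn_ge0 ?sumsq3_ge0 // sqrCK.
Qed.

(* If |a|, |d|, |1 - a - d| >= k, the defect of [[a, 0], [c, d]] dominates k
   times its distance to the identity. *)
Lemma norm3_far a c d k : 0 <= k -> k <= `|a| -> k <= `|d| -> k <= `|1 - a - d| ->
  k * norm3 (1 - a) c (1 - d) <= norm3 (a - a ^+ 2) (c * (1 - a - d)) (d - d ^+ 2).
Proof.
move=> k_ge0 ha hd hs; rewrite norm3_scale //.
have -> : a - a ^+ 2 = a * (1 - a) by ring.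
have -> : d - d ^+ 2 = d * (1 - d) by ring.
by apply: norm3_le; rewrite !normrM ger0_norm // ?[`|c| * _]mulrC ler_wpM2r.
Qed.

(* The lower triangular matrix T = [[a, 0], [c, d]] with ||T - T^2||_HS <= eps < 2/9;
   all its bounds are driven by the smaller root u of u - u^2 = eps. *)
Section LowerTriangular.
Variables a c d eps : C.
Local Notation defect := (norm3 (a - a ^+ 2) (c * (1 - a - d)) (d - d ^+ 2)).
Local Notation u := (lowroot eps).
Hypothesis defect_le : defect <= eps.
Hypothesis eps_lt : eps < 2/9.

Let eps_ge0 : 0 <= eps. Proof. exact: le_trans (norm3_ge0 _ _ _) defect_le. Qed.
Let eps_le : eps <= 1/4. Proof. exact: lt_two_ninths_le_quarter. Qed.
Let u_ge0 : 0 <= u. Proof. by have [] := lowroot_bounds eps_ge0 eps_le. Qed.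
Let one_sub_u_gt0 : 0 < 1 - u. Proof. exact: rho_den_gt0. Qed.

Let diag_defects_le : `|a - a ^+ 2| ^+ 2 + `|d - d ^+ 2| ^+ 2 <= eps ^+ 2.
Proof.
apply: le_trans (sqr_outer_le_norm3 _ (c * (1 - a - d)) _) _.
by rewrite ler_sqr ?nnegrE ?norm3_ge0.
Qed.

Let diag_defect_le x : `|x - x ^+ 2| ^+ 2 <= eps ^+ 2 -> `|x - x ^+ 2| <= u - u ^+ 2.
Proof. by move=> h; rewrite lowroot_root -ler_sqr ?nnegrE. Qed.

Lemma eigen_rounding : exists b1 b2 : bool,
  `|a - b1%:R| + `|d - b2%:R| <= sqrtC 2 * u /\
  `|a - b1%:R| ^+ 2 + `|d - b2%:R| ^+ 2 <= u ^+ 2.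
Proof.
have [pa pd] : `|a - a ^+ 2| ^+ 2 <= eps ^+ 2 /\ `|d - d ^+ 2| ^+ 2 <= eps ^+ 2.
  by split; apply: le_trans diag_defects_le; rewrite ?lerDl ?lerDr exprn_ge0.
have [b1 hb1] := round_to_root u_ge0 (diag_defect_le pa).
have [b2 hb2] := round_to_root u_ge0 (diag_defect_le pd).
exists b1, b2; suff sq_le : `|a - b1%:R| ^+ 2 + `|d - b2%:R| ^+ 2 <= u ^+ 2.
  by split=> //; apply: sum_le_sqrt2.
rewrite -(ler_pM2l (exprn_gt0 2 one_sub_u_gt0)) mulrDr -!exprMn.
apply: le_trans (le_trans (lerD _ _) diag_defects_le) _.
- by rewrite ler_sqr ?nnegrE ?mulr_ge0 ?(ltW one_sub_u_gt0).
- by rewrite ler_sqr ?nnegrE ?mulr_ge0 ?(ltW one_sub_u_gt0).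
by rewrite (_ : (1 - u) * u = eps) // -[RHS](lowroot_root eps); ring.
Qed.

Lemma trace_rounding (b1 b2 : bool) : `|a - b1%:R| + `|d - b2%:R| <= sqrtC 2 * u ->
  `|a + d - (b1 + b2)%N%:R| <= sqrtC 2 * u.
Proof.
apply: le_trans; rewrite natrD (_ : a + d - _ = (a - b1%:R) + (d - b2%:R)); last by ring.
exact: ler_normD.
Qed.

Lemma rounding_index (b1 b2 : bool) (m : nat) :
  `|a - b1%:R| + `|d - b2%:R| <= sqrtC 2 * u -> `|a + d - m%:R| < 1/2 -> (b1 + b2)%N = m.
Proof.
move=> /trace_rounding h; apply: near_nat_unique.
exact: le_trans h (sqrt2_lowroot_le eps_ge0 eps_lt).
Qed.

Lemma tri_trace_disc : exists j : 'I_3, `|a + d - j%:R| <= sqrtC 2 * rho eps * eps.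
Proof.
have [b1 [b2 [h _]]] := eigen_rounding.
exists (inord (b1 + b2)); rewrite inordK -?mulrA ?rho_mul ?trace_rounding //.
by case: b1 b2 {h} => [] [].
Qed.

(* Near the identity every entry of T - I is bounded by the defect divided by
   k = 1 - sqrt 2 * u, the lower bound on |a|, |d| and |1 - a - d|. *)
Lemma tri_near_identity :
  `|a + d - 2| < 1/2 -> norm3 (1 - a) (- c) (1 - d) <= kappa eps * eps.
Proof.
have [b1 [b2 [hsum _]]] := eigen_rounding.
move=> /(rounding_index hsum); case: b1 b2 hsum => [] [] //= hsum _.
have k_gt0 := kappa_den_gt0 eps_ge0 eps_le.
have bound w v : `|v| = 1 -> `|w - v| <= sqrtC 2 * u -> 1 - sqrtC 2 * u <= `|w|.
  by move=> hv /norm_ge_near; rewrite hv.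
have [ha hd] : `|a - 1| <= sqrtC 2 * u /\ `|d - 1| <= sqrtC 2 * u.
  by split; apply: le_trans hsum; rewrite ?lerDl ?lerDr.
have hs : `|(1 - a - d) - (-1)| <= sqrtC 2 * u.
  rewrite (_ : _ - _ = - ((a - 1) + (d - 1))); last by ring.
  by rewrite normrN (le_trans (ler_normD _ _) hsum).
rewrite kappaE /norm3 normrN -/(norm3 _ _ _) mulrC ler_pdivlMr // mulrC.
apply: le_trans defect_le; apply: norm3_far (ltW k_gt0) _ _ _.
- exact: bound (normr1 _) ha.
- exact: bound (normr1 _) hd.
- exact: bound (normrN1 _) hs.
Qed.

(* Near trace 1 the rounding is (1, 0) or (0, 1), giving a rank-one idempotent
   [[b1, 0], [c, b2]] at HS distance at most u = rho eps * eps. *)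
Lemma tri_near_rank_one : `|a + d - 1| < 1/2 -> exists b1 b2 : bool,
  (b1 + b2)%N = 1%N /\ norm3 (a - b1%:R) 0 (d - b2%:R) <= rho eps * eps.
Proof.
have [b1 [b2 [hsum hsq]]] := eigen_rounding.
move=> /(@rounding_index _ _ 1 hsum) hb; exists b1, b2; split=> //.
by rewrite rho_mul sqrtC_le ?sumsq3_ge0 // normr0 expr0n addr0.
Qed.

(* Each diagonal entry satisfies |2x - 1|^2 = |1 - 4(x - x^2)| >= 1 - 4|x - x^2|,
   and |a - a^2| + |d - d^2| <= sqrt 2 * defect <= (3/2) * defect. *)
Lemma tri_lower_bound : sqrtC (2 - 6 * defect) <= norm3 (2 * a - 1) (2 * c) (2 * d - 1).
Proof.
have diag_bound x : 1 - 4 * `|x - x ^+ 2| <= `|2 * x - 1| ^+ 2.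
  rewrite -normrX (_ : (2 * x - 1) ^+ 2 = 1 - 4 * (x - x ^+ 2)); last by ring.
  by have := lerB_dist 1 (4 * (x - x ^+ 2)); rewrite normr1 normrM normr_nat.
have sum_le : 4 * (`|a - a ^+ 2| + `|d - d ^+ 2|) <= 6 * defect.
  have pq_le : `|a - a ^+ 2| + `|d - d ^+ 2| <= sqrtC 2 * defect.
    apply: sum_le_sqrt2; rewrite ?normr_ge0 ?norm3_ge0 //.
    exact: sqr_outer_le_norm3.
  apply: le_trans (ler_wpM2l (ler0n _ 4) pq_le) _.
  rewrite -subr_ge0 (_ : _ - _ = 2 * (3 - 2 * sqrtC 2) * defect); last by ring.
  by rewrite !mulr_ge0 ?ler0n ?norm3_ge0 // subr_ge0 two_sqrt2_le3.
have rhs_ge0 : 0 <= 2 - 6 * defect.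
  rewrite (_ : 2 - 6 * defect = 6 * (2/9 - defect) + 2/3); last by field.
  have h : 0 <= 2/9 - defect by rewrite subr_ge0 (ltW (le_lt_trans defect_le eps_lt)).
  by apply: addr_ge0; [apply: mulr_ge0 | apply: divr_ge0]; rewrite ?ler0n.
rewrite ler_sqrtC ?nnegrE ?sumsq3_ge0 //.
apply: le_trans (_ : (1 - 4 * `|a - a ^+ 2|) + 0 + (1 - 4 * `|d - d ^+ 2|) <= _).
  rewrite -subr_ge0 (_ : _ - _ = 6 * defect - 4 * (`|a - a ^+ 2| + `|d - d ^+ 2|)); last by ring.
  by rewrite subr_ge0.
by rewrite !lerD ?diag_bound ?exprn_ge0.
Qed.

End LowerTriangular.

(* The symmetry T |-> I - T preserves the defect and exchanges traces 0 and 2. *)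
Lemma tri_near_zero a c d eps :
  norm3 (a - a ^+ 2) (c * (1 - a - d)) (d - d ^+ 2) <= eps -> eps < 2/9 ->
  `|a + d| < 1/2 -> norm3 a c d <= kappa eps * eps.
Proof.
have -> : norm3 (a - a ^+ 2) (c * (1 - a - d)) (d - d ^+ 2) =
  norm3 ((1 - a) - (1 - a) ^+ 2) (- c * (1 - (1 - a) - (1 - d))) ((1 - d) - (1 - d) ^+ 2).
  by congr norm3; ring.
move=> /tri_near_identity near_id /near_id; rewrite (_ : _ + _ - 2 = - (a + d)); last by ring.
by rewrite normrN (_ : norm3 _ _ _ = norm3 a c d) //; congr norm3; ring.
Qed.

Lemma ord2P (i : 'I_2) : i = 0 \/ i = 1.
Proof. by case: i => [[|[|//]] i_lt]; [left | right]; apply: val_inj. Qed.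

Definition mx2 x y z w : 'M[C]_2 :=
  \matrix_(i < 2, j < 2) nth 0 (nth [::] [:: [:: x; y]; [:: z; w]] i) j.

Lemma mx2P (M : 'M[C]_2) x y z w :
  M 0 0 = x -> M 0 1 = y -> M 1 0 = z -> M 1 1 = w -> M = mx2 x y z w.
Proof.
move=> h00 h01 h10 h11; apply/matrixP => i j; rewrite mxE.
by case: (ord2P i) => ->; case: (ord2P j) => -> /=.
Qed.

Lemma mx2_sub x y z w x' y' z' w' :
  mx2 x y z w - mx2 x' y' z' w' = mx2 (x - x') (y - y') (z - z') (w - w').
Proof. by apply: mx2P; rewrite !mxE. Qed.

Lemma mx2_scale k x y z w : k *: mx2 x y z w = mx2 (k * x) (k * y) (k * z) (k * w).
Proof. by apply: mx2P; rewrite !mxE. Qed.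

Lemma mx2_one : 1%:M = mx2 1 0 0 1.
Proof. by apply: mx2P; rewrite !mxE. Qed.

Lemma mx2_mul x y z w x' y' z' w' : mx2 x y z w *m mx2 x' y' z' w' =
  mx2 (x * x' + y * z') (x * y' + y * w') (z * x' + w * z') (z * y' + w * w').
Proof. by apply: mx2P; rewrite !mxE !big_ord_recl big_ord0 !mxE /= addr0. Qed.

Lemma mxtrace_mx2 x y z w : \tr (mx2 x y z w) = x + w.
Proof. by rewrite /mxtrace !big_ord_recl big_ord0 !mxE /= addr0. Qed.

Lemma hs_norm_mx2 x z w : hs_norm (mx2 x 0 z w) = norm3 x z w.
Proof.
rewrite /hs_norm /mxtrace !big_ord_recl !big_ord0 !mxE !big_ord_recl !big_ord0 !mxE /=.
by rewrite /norm3 -!normCKC normr0 expr0n /=; congr sqrtC; ring.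
Qed.

Lemma hs_normE n (M : 'M[C]_n) : hs_norm M = sqrtC (\tr (M^t* *m M)).
Proof. by rewrite /hs_norm map_trmx. Qed.

Lemma hs_norm_ge0 n (M : 'M[C]_n) : 0 <= hs_norm M.
Proof.
rewrite /hs_norm sqrtC_ge0 sumr_ge0 // => i _; rewrite !mxE sumr_ge0 // => k _.
by rewrite !mxE -normCKC exprn_ge0.
Qed.

Definition uconj n (P M : 'M[C]_n) : 'M[C]_n := P^t* *m M *m P.

Section UnitaryConjugation.
Variables (n : nat) (P : 'M[C]_n).
Hypothesis P_unitary : P *m P^t* = 1%:M.

Let P_unitary' : P^t* *m P = 1%:M. Proof. exact: mulmx1C. Qed.

Lemma uconjB (M N : 'M[C]_n) : uconj P (M - N) = uconj P M - uconj P N.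
Proof. by rewrite /uconj mulmxBr mulmxBl. Qed.

Lemma uconjZ k (M : 'M[C]_n) : uconj P (k *: M) = k *: uconj P M.
Proof. by rewrite /uconj -scalemxAr -scalemxAl. Qed.

Lemma uconj1 : uconj P 1%:M = 1%:M.
Proof. by rewrite /uconj mulmx1. Qed.

Lemma uconjM (M N : 'M[C]_n) : uconj P (M *m N) = uconj P M *m uconj P N.
Proof. by rewrite /uconj !mulmxA -(mulmxA _ P) P_unitary mulmx1. Qed.

Lemma mxtrace_uconj (M : 'M[C]_n) : \tr (uconj P M) = \tr M.
Proof. by rewrite /uconj mxtrace_mulC mulmxA P_unitary mul1mx. Qed.

Lemma hs_norm_uconj (M : 'M[C]_n) : hs_norm (uconj P M) = hs_norm M.
Proof.
rewrite !hs_normE /uconj !trmx_mul !map_mxM trmxCK -!mulmxA.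
rewrite (mulmxA P) P_unitary mul1mx mxtrace_mulC -!mulmxA P_unitary mulmx1.
by rewrite mxtrace_mulC.
Qed.

Lemma mxrank_uconj (M : 'M[C]_n) : \rank (uconj P M) = \rank M.
Proof.
have P_unit : P \in unitmx by case/mulmx1_unit: P_unitary'.
have Pt_unit : P^t* \in unitmx by case/mulmx1_unit: P_unitary.
by rewrite /uconj mxrankMfree ?row_free_unit // eqmxMfull ?row_full_unit.
Qed.
End UnitaryConjugation.

(* An idempotent 2x2 matrix of trace 1 has rank 1: rank 0 forces Q = 0 and
   rank 2 forces Q = 1, both of the wrong trace. *)
Lemma rank_idem_trace1 (Q : 'M[C]_2) : Q *m Q = Q -> \tr Q = 1 -> \rank Q = 1%N.
Proof.
move=> QQ trQ; have rk_le2 : (\rank Q <= 2)%N := rank_leq_row Q.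
have rk_neq0 : \rank Q != 0%N.
  rewrite mxrank_eq0; apply: contra_eq_neq trQ => ->.
  by rewrite mxtrace0 eq_sym oner_neq0.
have rk_neq2 : \rank Q != 2%N.
  apply/negP => /eqP rk2; have Q_unit : Q \in unitmx by rewrite -row_free_unit /row_free rk2.
  have Q1 : Q = 1%:M by rewrite -[Q]mulmx1 -(mulmxV Q_unit) mulmxA QQ.
  by move: trQ; rewrite Q1 mxtrace1 => /eqP; rewrite pnatr_eq1.
by move: rk_le2 rk_neq0 rk_neq2; case: (\rank Q) => [|[|[|]]].
Qed.

Lemma mx2_rank_one_idem (b1 b2 : bool) c : (b1 + b2)%N = 1%N ->
  mx2 b1%:R 0 c b2%:R *m mx2 b1%:R 0 c b2%:R = mx2 b1%:R 0 c b2%:R /\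
  \rank (mx2 b1%:R 0 c b2%:R) = 1%N.
Proof.
move=> b_sum; have idem : mx2 b1%:R 0 c b2%:R *m mx2 b1%:R 0 c b2%:R = mx2 b1%:R 0 c b2%:R.
  by rewrite mx2_mul; case: b1 b2 b_sum => [] [] //= _; congr mx2; ring.
split=> //; apply: rank_idem_trace1 => //.
by rewrite mxtrace_mx2 -natrD b_sum.
Qed.

Lemma in_cdisc z w r : (z \in cdisc w r) = (`|z - w| <= r).
Proof. by rewrite unfold_in. Qed.

Lemma disc_radius_le eps : 0 <= eps -> eps < 2/9 -> sqrtC 2 * rho eps * eps <= 10/21.
Proof. by move=> eps_ge0 eps_lt; rewrite -mulrA rho_mul sqrt2_lowroot_le. Qed.

Definition near_idem_bounds (A : 'M[C]_2) eps : Prop :=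
  [/\ sqrtC (2 - 6 * hs_norm (A - A *m A)) <= hs_norm (2 *: A - 1%:M),
      exists j : 'I_3, \tr A \in cdisc j%:R (sqrtC 2 * rho eps * eps),
      `|\tr A - 2| < 1/2 -> hs_norm (1%:M - A) <= kappa eps * eps,
      `|\tr A| < 1/2 -> hs_norm A <= kappa eps * eps &
      `|\tr A - 1| < 1/2 -> exists P : 'M[C]_2,
         P *m P = P /\ \rank P = 1%N /\ hs_norm (A - P) <= rho eps * eps].

Lemma near_idem_bounds_uconj P T eps : P *m P^t* = 1%:M ->
  near_idem_bounds T eps -> near_idem_bounds (uconj P T) eps.
Proof.
move=> P_unitary [lower disc near_id near_zero rank_one].
have defectE : uconj P T - uconj P T *m uconj P T = uconj P (T - T *m T).
  by rewrite uconjB ?uconjM.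
have doubleE : 2 *: uconj P T - 1%:M = uconj P (2 *: T - 1%:M).
  by rewrite uconjB uconjZ uconj1.
have complE : 1%:M - uconj P T = uconj P (1%:M - T) by rewrite uconjB uconj1.
split; rewrite ?mxtrace_uconj ?defectE ?doubleE ?complE ?hs_norm_uconj //.
move=> /rank_one [Q [QQ [rkQ hQ]]]; exists (uconj P Q).
by rewrite -uconjM // QQ mxrank_uconj // -uconjB hs_norm_uconj.
Qed.

Lemma near_idem_bounds_lower a c d eps :
  hs_norm (mx2 a 0 c d - mx2 a 0 c d *m mx2 a 0 c d) <= eps -> eps < 2/9 ->
  near_idem_bounds (mx2 a 0 c d) eps.
Proof.
rewrite /near_idem_bounds.
have -> : mx2 a 0 c d - mx2 a 0 c d *m mx2 a 0 c d =
    mx2 (a - a ^+ 2) 0 (c * (1 - a - d)) (d - d ^+ 2).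
  by rewrite mx2_mul mx2_sub; congr mx2; ring.
rewrite hs_norm_mx2 mxtrace_mx2 => defect_le eps_lt; split.
- have -> : 2 *: mx2 a 0 c d - 1%:M = mx2 (2 * a - 1) 0 (2 * c) (2 * d - 1).
    by rewrite mx2_one mx2_scale mx2_sub; congr mx2; ring.
  by rewrite hs_norm_mx2 (tri_lower_bound defect_le eps_lt).
- by have [j hj] := tri_trace_disc defect_le eps_lt; exists j; rewrite in_cdisc.
- have -> : 1%:M - mx2 a 0 c d = mx2 (1 - a) 0 (- c) (1 - d).
    by rewrite mx2_one mx2_sub; congr mx2; ring.
  by rewrite hs_norm_mx2; apply: tri_near_identity.
- by rewrite hs_norm_mx2; apply: tri_near_zero.
move=> /(tri_near_rank_one defect_le eps_lt) [b1 [b2 [b_sum h]]].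
have [idem rk] := mx2_rank_one_idem c b_sum.
exists (mx2 b1%:R 0 c b2%:R); split=> //; split=> //.
by rewrite mx2_sub !subrr hs_norm_mx2.
Qed.

Lemma schur_lower2 (A : 'M[C]_2) :
  exists P a c d, P *m P^t* = 1%:M /\ A = uconj P (mx2 a 0 c d).
Proof.
have [P P_unitary] := Schur A isT.
rewrite /similar_to conjymx //= => /is_trig_mxP T_lower.
have PP := unitarymxP P_unitary; have PP' := mulmx1C PP.
set T := P *m A *m P^t* in T_lower.
exists P, (T 0 0), (T 1 0), (T 1 1); split=> //.
rewrite -(mx2P (erefl (T 0 0)) (T_lower 0 1 isT) (erefl _) (erefl _)).
by rewrite /uconj /T !mulmxA PP' mul1mx -mulmxA PP' mulmx1.
Qed.

End NearIdempotent.

Theorem lemmal (C : numClosedFieldType) :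
  (* (a) *)
  ((forall s t : C, 0 <= s -> s < t -> t <= 1/4 -> rho s < rho t) /\
   (forall s t : C, 0 <= s -> s < t -> t <= 1/4 -> kappa s < kappa t) /\
   (forall t : C, 0 <= t -> t <= 1/4 -> rho t <= kappa t) /\
   (forall n : nat, (0 < n)%N ->
      rho (n%:R / (n.+1%:R ^+ 2) : C) = n.+1%:R / n%:R /\
      kappa (n%:R / (n.+1%:R ^+ 2) : C) = (1 - sqrtC 2 / n.+1%:R)^-1 /\
      (1 - sqrtC 2 / n.+1%:R)^-1 < ((1 : C) - 10 / (7 * n.+1%:R))^-1)) /\
  (* (b) *)
  (forall (A : 'M[C]_2) (eps : C),
     hs_norm (A - A *m A) <= eps -> eps < 2/9 ->
     sqrtC (2 - 6 * hs_norm (A - A *m A)) <= hs_norm (2 *: A - 1%:M) /\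
         (exists j : 'I_3, \tr A \in cdisc (j%:R) (sqrtC 2 * rho eps * eps)) /\
         (forall z : C, (exists j : 'I_3, z \in cdisc (j%:R) (sqrtC 2 * rho eps * eps)) ->
                        exists j : 'I_3, z \in cdisc (j%:R) (10/21)) /\
         (`|\tr A - 2| < 1/2 -> hs_norm (1%:M - A) <= kappa eps * eps) /\
         (`|\tr A| < 1/2 -> hs_norm A <= kappa eps * eps) /\
         (`|\tr A - 1| < 1/2 ->
            exists P : 'M[C]_2, P *m P = P /\ \rank P = 1%N /\
                                hs_norm (A - P) <= rho eps * eps)).
Proof.
split.
  split; first exact: rho_increasing.
  split; first exact: kappa_increasing.
  split; first exact: rho_le_kappa.
  by move=> n n_gt0; rewrite rho_at // kappa_at // kappa_at_lt.
move=> A eps defect_le eps_lt; have eps_ge0 := le_trans (hs_norm_ge0 _) defect_le.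
have radius z : (exists j : 'I_3, z \in cdisc j%:R (sqrtC 2 * rho eps * eps)) ->
    exists j : 'I_3, z \in cdisc j%:R (10/21).
  move=> [j]; rewrite in_cdisc => hj; exists j.
  by rewrite in_cdisc (le_trans hj) ?disc_radius_le.
have [P [a [c [d [P_unitary A_eq]]]]] := schur_lower2 A.
have defect_T : hs_norm (mx2 a 0 c d - mx2 a 0 c d *m mx2 a 0 c d) <= eps.
  by move: defect_le; rewrite A_eq -uconjM // -uconjB hs_norm_uconj.
have [lower disc near_id near_zero rank_one] :=
  near_idem_bounds_uconj P_unitary (near_idem_bounds_lower defect_T eps_lt).
by rewrite A_eq.
Qed.
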